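(* Let $k,n\in\mathbb N^+$ and $\mathbf C=(c_0,\dots,c_k)\in\{0,1\}^{k+1}$. For every integer $m\ge c_k-1$, $$O_{\mathbf C}(n+1,m+1)=n^kF_{n+1}(\mathbf C)\,O_{\mathbf C}(n,m)+n^kF_{n+1}(\mathbf C')\,O_{\mathbf C}(n,m+1),$$ and the boundary values are $O_{\mathbf C}(n,m)=0$ whenever $m=c_k-1$ or $m>c_k-1+n$, and $O_{\mathbf C}(1,c_k)=1$.
   Context: Fix integers $k\ge 1$, $n\ge 1$ and a vector $\mathbf C=(c_0,c_1,\dots,c_k)\in\{0,1\}^{k+1}$; put $\mathbf C'=(1,\dots,1)-\mathbf C$. Consider $k$-tuples $(\pi_1,\dots,\pi_k)$ of permutations of $\{1,\dots,n\}$. A position $\alpha\in\{1,\dots,n\}$ is a record of a permutation $\pi$ if $\pi(\alpha)<\pi(\alpha')$ for every $\alpha'<\alpha$ (position $1$ is always a record); equivalently, records index the minimal elements of the points $(\alpha,\pi(\alpha))$ under strict componentwise domination. For a tuple, let $l_\alpha$ be the number of $\beta\in\{1,\dots,k\}$ for which $\alpha$ is a record of $\pi_\beta$ (so $l_1=k$). The $\mathbf C$ sequential optimization set of the tuple is $S=\{\alpha: c_{l_\alpha}=1\}$, with weight $|S|$. For an integer $m$, $O_{\mathbf C}(n,m)$ is the number of $k$-tuples of permutations of $\{1,\dots,n\}$ whose weight equals $m$ (so it is $0$ for $m<0$ or $m>n$). For $j\ge 2$ and $X=(x_0,\dots,x_k)\in\mathbb R^{k+1}$, $F_j(X)=\sum_{\beta=0}^k\binom{k}{\beta}\frac{x_\beta}{(j-1)^\beta}$.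 *)

From HB Require Import structures.
From mathcomp Require Import all_boot all_order all_algebra.
From mathcomp Require Import perm.
Set Implicit Arguments. Unset Strict Implicit. Unset Printing Implicit Defensive.
Import Order.TTheory GRing.Theory Num.Theory.

(* Permutations of {1,...,n} are modelled as 'S_n (permutations of 'I_n =
   {0,...,n-1}); positions and values are shifted by one, which does not
   affect records. *)

Definition is_record (n : nat) (p : 'S_n) (a : 'I_n) : bool :=
  [forall b : 'I_n, (b < a)%N ==> (p a < p b)%N].

Definition lcount (k n : nat) (t : {ffun 'I_k -> 'S_n}) (a : 'I_n) : nat :=
  #|[set b : 'I_k | is_record (t b) a]|.

Definition seqopt_set (k n : nat) (C : {ffun 'I_k.+1 -> bool})
    (t : {ffun 'I_k -> 'S_n}) : {set 'I_n} :=
  [set a : 'I_n | C (inord (lcount t a))].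

Definition weight (k n : nat) (C : {ffun 'I_k.+1 -> bool})
    (t : {ffun 'I_k -> 'S_n}) : nat := #|seqopt_set C t|.

Definition O (k : nat) (C : {ffun 'I_k.+1 -> bool}) (n : nat) (m : int) : nat :=
  #|[set t : {ffun 'I_k -> 'S_n} | Posz (weight C t) == m]|.

Definition Ccomp (k : nat) (C : {ffun 'I_k.+1 -> bool}) : {ffun 'I_k.+1 -> bool} :=
  [ffun i => ~~ C i].

Definition F (k : nat) (j : nat) (X : {ffun 'I_k.+1 -> bool}) : rat :=
  (\sum_(b < k.+1) ('C(k, b))%:R * (X b : nat)%:R / (j.-1)%:R ^+ b)%R.

From mathcomp Require Import all_boot all_order all_algebra.
From mathcomp Require Import perm zify ring.
Import Order.TTheory GRing.Theory Num.Theory.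

(* A permutation of {0,...,n} is a permutation q of {0,...,n-1} together
   with the value v taken at the last position ([lift_perm]).  The records
   among the first n positions are those of q, and the last position is a
   record exactly when v = 0.  So extending a k-tuple of permutations by
   values v_1,...,v_k adds c_b to its weight, where b is the number of
   v_i = 0; there are C(k,b) n^(k-b) such value vectors, and
   sum_b C(k,b) n^(k-b) c_b = n^k F_(n+1)(C) gives the recursion.
   Position 0 is a record of every permutation, so every weight of a tuple
   of permutations of n elements lies in [c_k, c_k + n - 1], which gives the
   boundary values. *)

Section Records.

Variable n : nat.

Lemma is_record_lift_perm_lift (q : 'S_n) (v : 'I_n.+1) (i : 'I_n) :
  is_record (lift_perm ord_max v q) (lift ord_max i) = is_record q i.
Proof.
have lt_lift (h : 'I_n.+1) (a b : 'I_n) : (lift h a < lift h b) = (a < b).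
  by rewrite /= !ltnNge leq_bump2.
apply/forallP/forallP => rec_i b.
  by have := rec_i (lift ord_max b); rewrite !lift_perm_lift !lt_lift.
case: (unliftP ord_max b) => [b'|] ->.
  by rewrite !lift_perm_lift !lt_lift; apply: rec_i.
by apply/implyP; rewrite lift_max /= ltnNge (ltnW (ltn_ord i)).
Qed.

Lemma is_record_lift_perm_max (q : 'S_n) (v : 'I_n.+1) :
  is_record (lift_perm ord_max v q) ord_max = (v == ord0).
Proof.
set p := lift_perm ord_max v q.
apply/forallP/eqP => [rec_max | v0]; last first.
  move=> b; apply/implyP => lt_b_max.
  have : p b != p ord_max.
    by rewrite (inj_eq perm_inj); apply: contraTneq lt_b_max => ->; rewrite ltnn.
  by rewrite /p lift_perm_id v0 lt0n.
(* If v > 0, the value 0 sits at some position w before the last one. *)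
apply/val_inj/eqP; rewrite /= -leqn0 leqNgt; apply/negP => v_gt0.
pose w := (p^-1)%g ord0.
have p_w : p w = ord0 by rewrite /w permKV.
have w_max : w != ord_max.
  by apply: contraTneq v_gt0 => w_eq; move: p_w; rewrite w_eq /p lift_perm_id => ->.
have := rec_max w; rewrite p_w /p lift_perm_id ltn0 implybF => /negP; apply.
by rewrite ltn_neqAle leq_ord andbT; exact: w_max.
Qed.

Lemma is_record_ord0 (p : 'S_n.+1) : is_record p ord0.
Proof. by apply/forallP => b; rewrite ltn0. Qed.

Lemma card_ord_max_lift (A : {set 'I_n.+1}) :
  #|A| = (ord_max \in A) + #|[set i : 'I_n | lift ord_max i \in A]|.
Proof.
rewrite (cardD1 ord_max) -[in RHS](card_imset _ (@lift_inj _ ord_max)).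
congr (_ + _); apply: eq_card => x; rewrite inE.
case: (unliftP ord_max x) => [j|] ->.
  by rewrite mem_imset ?inE ?lift_eqF //; exact: lift_inj.
by rewrite eqxx; apply/esym/imsetP => -[j _ /eqP]; rewrite eq_liftF.
Qed.

End Records.

Section Extension.

Variables k n : nat.

Definition extend_perms (x : {ffun 'I_k -> 'S_n} * {ffun 'I_k -> 'I_n.+1}) :
  {ffun 'I_k -> 'S_n.+1} := [ffun b => lift_perm ord_max (x.2 b) (x.1 b)].

Definition zero_count (v : {ffun 'I_k -> 'I_n.+1}) : nat :=
  #|[set b | v b == ord0]|.

Lemma zero_count_le (v : {ffun 'I_k -> 'I_n.+1}) : zero_count v <= k.
Proof. by rewrite -[X in _ <= X](card_ord k) max_card. Qed.

Lemma weight_extend_perms (C : {ffun 'I_k.+1 -> bool}) q v :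
  weight C (extend_perms (q, v)) = weight C q + C (inord (zero_count v)).
Proof.
rewrite /weight /seqopt_set card_ord_max_lift inE addnC; congr (_ + _).
  apply: eq_card => i; rewrite !inE; congr (C (inord _)).
  by apply: eq_card => b; rewrite !inE ffunE is_record_lift_perm_lift.
congr (nat_of_bool (C (inord _))).
by apply: eq_card => b; rewrite !inE ffunE is_record_lift_perm_max.
Qed.

Lemma extend_perms_inj : injective extend_perms.
Proof.
move=> [q v] [q' v'] eq_ext.
have eq_at b i := congr1 (fun t : {ffun 'I_k -> 'S_n.+1} => t b i) eq_ext.
have eq_v : v = v'.
  by apply/ffunP => b; have := eq_at b ord_max; rewrite !ffunE !lift_perm_id.
congr pair => //; apply/ffunP => b; apply/permP => i.
by have := eq_at b (lift ord_max i); rewrite !ffunE !lift_perm_lift eq_v => /lift_inj.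
Qed.

Lemma extend_perms_bij : bijective extend_perms.
Proof.
apply: inj_card_bij; first exact: extend_perms_inj.
by rewrite card_prod !card_ffun !card_Sn !card_ord -expnMn factS mulnC.
Qed.

Lemma card_zero_set (A : {set 'I_k}) :
  #|[pred v : {ffun 'I_k -> 'I_n.+1} | [set b | v b == ord0] == A]|
    = n ^ (k - #|A|).
Proof.
pose F b := if b \in A then pred1 (@ord0 n) else predC1 (@ord0 n).
have -> : #|[pred v : {ffun 'I_k -> 'I_n.+1} | [set b | v b == ord0] == A]|
          = #|family F|.
  apply: eq_card => v; rewrite !inE; apply/eqP/familyP => [zero_A b | v_F].
    by rewrite /F -zero_A inE; case: eqP => [-> | /eqP]; rewrite !inE ?eqxx.
  apply/setP => b; have := v_F b; rewrite /F !inE.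
  by case: (b \in A) => /= [/eqP -> | /negbTE].
rewrite card_family foldrE big_map big_enum /=.
rewrite (eq_bigr (fun b => if b \in ~: A then n else 1)); last first.
  by move=> b _; rewrite /F inE; case: (b \in A); rewrite ?card1 ?cardC1 ?card_ord.
rewrite -big_mkcond prod_nat_const /=.
by rewrite cardsCs setCK card_ord.
Qed.

Lemma card_zero_count b :
  #|[set v : {ffun 'I_k -> 'I_n.+1} | zero_count v == b]| = 'C(k, b) * n ^ (k - b).
Proof.
rewrite -sum1_card (partition_big (fun v : {ffun _} => [set b | v b == ord0])
                                  (fun A : {set 'I_k} => #|A| == b)) /=; last first.
  by move=> v; rewrite inE.
rewrite (eq_bigr (fun _ => n ^ (k - b))); last first.
  move=> A /eqP <-; rewrite -card_zero_set -[RHS]sum1_card; apply: eq_bigl => v.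
  rewrite !inE /zero_count.
  by case: (_ =P A) => [-> | _]; rewrite ?eqxx ?andbF.
rewrite sum_nat_const; congr (_ * _).
by rewrite -[k in 'C(k, _)](card_ord k) -card_draws; apply: eq_card => A; rewrite inE.
Qed.

Lemma sum_by_zero_count (g : 'I_k.+1 -> nat) :
  \sum_(v : {ffun 'I_k -> 'I_n.+1}) g (inord (zero_count v))
    = \sum_(b < k.+1) 'C(k, b) * n ^ (k - b) * g b.
Proof.
rewrite (partition_big (fun v => inord (zero_count v) : 'I_k.+1) predT) //=.
apply: eq_bigr => b _; rewrite (eq_bigr (fun _ => g b)); last by move=> v /eqP ->.
rewrite -card_zero_count -sum_nat_const; apply: eq_bigl => v; rewrite inE.
have zk : zero_count v < k.+1 by rewrite ltnS zero_count_le.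
by apply/eqP/eqP => [<- | eq_b]; [rewrite inordK | apply: val_inj; rewrite /= inordK].
Qed.

Lemma O_succ_sum (C : {ffun 'I_k.+1 -> bool}) (m : int) :
  O C n.+1 (m + 1)%R
    = \sum_(b < k.+1) 'C(k, b) * n ^ (k - b) * (if C b then O C n m else O C n (m + 1)%R).
Proof.
rewrite -(sum_by_zero_count (fun b => if C b then _ else _)) /O -sum1_card big_mkcond /=.
rewrite (reindex extend_perms); last exact: onW_bij extend_perms_bij.
pose G (q : {ffun 'I_k -> 'S_n}) (v : {ffun 'I_k -> 'I_n.+1}) :=
  if Posz (weight C q + C (inord (zero_count v))) == (m + 1)%R then 1 else 0.
rewrite (eq_bigr (fun x => G x.1 x.2)); last by case=> q v _; rewrite inE weight_extend_perms.
rewrite -(pair_bigA _ G) exchange_big /=; apply: eq_bigr => v _.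
rewrite /G; case: (C (inord (zero_count v)));
  rewrite -[RHS]sum1_card [RHS]big_mkcond; apply: eq_bigr => q _;
  by rewrite inE; congr (if _ then _ else _); apply/eqP/eqP; lia.
Qed.

End Extension.

Lemma F_succ_scaled {k n : nat} (X : {ffun 'I_k.+1 -> bool}) : 0 < n ->
  (n%:R ^+ k * F n.+1 X = \sum_(b < k.+1) ('C(k, b) * n ^ (k - b) * X b)%:R :> rat)%R.
Proof.
move=> n_gt0; rewrite /F mulr_sumr; apply: eq_bigr => b _.
have n_unit : (n%:R : rat) \is a GRing.unit by rewrite unitfE pnatr_eq0 -lt0n.
by rewrite /= !natrM natrX (exprB (leq_ord b) n_unit); ring.
Qed.

Lemma O_succ_recursion {k n : nat} (C : {ffun 'I_k.+1 -> bool}) (m : int) : 0 < n ->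
  ((O C n.+1 (m + 1)%R)%:R : rat)
    = (n%:R ^+ k * F n.+1 C * (O C n m)%:R
       + n%:R ^+ k * F n.+1 (Ccomp C) * (O C n (m + 1)%R)%:R)%R.
Proof.
move=> n_gt0; rewrite O_succ_sum !F_succ_scaled // !natr_sum !mulr_suml -big_split.
by apply: eq_bigr => b _; rewrite ffunE !natrM; case: (C b); rewrite /=; ring.
Qed.

Lemma weight_range {k n : nat} (C : {ffun 'I_k.+1 -> bool}) (t : {ffun 'I_k -> 'S_n.+1}) :
  C ord_max <= weight C t <= C ord_max + n.
Proof.
have lcount0 : lcount t ord0 = k.
  by rewrite /lcount -[RHS](card_ord k) -cardsT; apply: eq_card => b; rewrite !inE is_record_ord0.
have ord0_C : (ord0 \in seqopt_set C t) = C ord_max.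
  by rewrite inE lcount0; congr (C _); apply: val_inj; rewrite /= inordK.
rewrite /weight (cardsD1 ord0) ord0_C leq_addr leq_add2l.
by rewrite (leq_trans (subset_leq_card (subsetDr _ _))) // cardsC1 card_ord.
Qed.

Lemma O_eq0_outside_range {k n : nat} (C : {ffun 'I_k.+1 -> bool}) (m : int) :
  (m < Posz (C ord_max))%R || (Posz (C ord_max + n) < m)%R -> O C n.+1 m = 0.
Proof.
move=> m_out; apply/eqP; rewrite cards_eq0; apply/eqP/setP => t; rewrite !inE.
apply: contraTF m_out => /eqP <-; have := weight_range C t; lia.
Qed.

Lemma O_1_weight {k : nat} (C : {ffun 'I_k.+1 -> bool}) : O C 1 (C ord_max) = 1.
Proof.
rewrite /O; have -> : [set t : {ffun 'I_k -> 'S_1} | Posz (weight C t) == C ord_max] = setT.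
  by apply/setP => t; rewrite !inE; have := weight_range C t; rewrite addn0; lia.
by rewrite cardsT card_ffun card_Sn card_ord exp1n.
Qed.

Theorem theorem3p1 (k n : nat) (C : {ffun 'I_k.+1 -> bool}) :
  (1 <= k)%N -> (1 <= n)%N ->
  (forall m : int, (Posz (C ord_max : nat) - 1 <= m)%R ->
     ((O C n.+1 (m + 1)%R)%:R : rat) =
       ((n%:R ^+ k * F n.+1 C * (O C n m)%:R)
        + (n%:R ^+ k * F n.+1 (Ccomp C) * (O C n (m + 1)%R)%:R))%R)
  /\ (forall m : int,
        (m = Posz (C ord_max : nat) - 1 \/ (Posz (C ord_max : nat) - 1 + Posz n < m))%R ->
        O C n m = 0%N)
  /\ O C 1 (Posz (C ord_max : nat)) = 1%N.
Proof.
move=> _ n_gt0; split; first by move=> m _; exact: O_succ_recursion.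
split; last exact: O_1_weight.
case: n n_gt0 => // n _ m m_out.
by apply: O_eq0_outside_range; case: m_out; lia.
Qed.
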